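(* Let $C(m)=\{(Tr(ax))_{x\in L}:a\in\mathcal{R}\}\subseteq R^{|L|}$ and consider the ternary linear code $\phi(C(m))\subseteq\mathbb{F}_3^{3|L|}$. In each of the following cases, $\phi(C(m))$ is optimal, i.e. no ternary linear code of the same length and the same dimension has strictly larger minimum Hamming distance: (i) $m$ is odd and $L=L'$ (so $\phi(C(m))$ has length $(3^{3m+1}-3^{2m+1})/2$); (ii) $m$ is any positive integer and $L=\mathcal{R}^*$ (so $\phi(C(m))$ has length $3^{3m+1}-3^{2m+1}$).
   Context: Let $R=\mathbb{F}_3[u]/(u^3-1)$ and $\mathcal{R}=\mathbb{F}_{3^m}[u]/(u^3-1)=\mathbb{F}_{3^m}+u\mathbb{F}_{3^m}+u^2\mathbb{F}_{3^m}$. Every element of $\mathcal{R}$ is uniquely $x_1+x_2(u-1)+x_3(u-1)^2$ with $x_i\in\mathbb{F}_{3^m}$; $\mathcal{R}^*$ (the units) consists of those with $x_1\neq0$. $Tr:\mathcal{R}\to R$ is $Tr(a+ub+u^2c)=tr(a)+u\,tr(b)+u^2tr(c)$, with $tr$ the absolute trace $\mathbb{F}_{3^m}\to\mathbb{F}_3$. $\mathcal{Q}$ denotes the nonzero squares of $\mathbb{F}_{3^m}$ and $L'=\{x_1+x_2(u-1)+x_3(u-1)^2:x_1\in\mathcal{Q},x_2,x_3\in\mathbb{F}_{3^m}\}$. The Gray map $\phi:R\to\mathbb{F}_3^3$ is $\phi(a'+ub'+u^2c')=(a',b',c')$, extended coordinatewise to $R^n\to\mathbb{F}_3^{3n}$.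 *)

From HB Require Import structures.
From mathcomp Require Import all_boot all_order all_algebra all_field.
Set Implicit Arguments. Unset Strict Implicit. Unset Printing Implicit Defensive.
Import GRing.Theory.
Local Open Scope ring_scope.

Section Defs.
Variable F : finFieldType.

(* The ring  F[u]/(u^3-1): (a0,a1,a2) stands for a0 + u a1 + u^2 a2. *)
Definition RR := (F * F * F)%type.
Definition c0 (x : RR) : F := x.1.1.
Definition c1 (x : RR) : F := x.1.2.
Definition c2 (x : RR) : F := x.2.
Definition mkR (a b c : F) : RR := (a, b, c).
Definition oneR : RR := mkR 1 0 0.
(* multiplication modulo u^3 = 1 *)
Definition mulR (a x : RR) : RR :=
  mkR (c0 a * c0 x + c1 a * c2 x + c2 a * c1 x)
      (c0 a * c1 x + c1 a * c0 x + c2 a * c2 x)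
      (c0 a * c2 x + c1 a * c1 x + c2 a * c0 x).

(* x1 + x2 (u-1) + x3 (u-1)^2  in the basis 1, u, u^2 *)
Definition ofUm1 (x1 x2 x3 : F) : RR :=
  mkR (x1 - x2 + x3) (x2 - 2%:R * x3) x3.

Definition unitsR : {set RR} := [set x : RR | [exists y : RR, mulR x y == oneR]].

Definition sqQ : {set F} := [set z : F | (z != 0) && [exists y : F, y ^+ 2 == z]].

Definition Lprime : {set RR} :=
  [set ofUm1 t.1.1 t.1.2 t.2 | t in [set t : F * F * F | t.1.1 \in sqQ]].

(* absolute trace F_{3^m} -> F_3, x |-> sum_{i<m} x^(3^i), read back in 'F_3 *)
Definition trF (m : nat) (x : F) : 'F_3 :=
  odflt 0 [pick k : 'F_3 | (nat_of_ord k)%:R == \sum_(i < m) x ^+ (3 ^ i)].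

Definition compR (r : nat) (x : RR) : F :=
  if r == 0%N then c0 x else if r == 1%N then c1 x else c2 x.

(* phi((Tr(a x))_{x in L}) in F_3^{3|L|}, coordinates ordered by enum L *)
Definition codeword (m : nat) (L : {set RR}) (a : RR) : 'rV['F_3]_(3 * #|L|) :=
  \row_(i < 3 * #|L|)
     trF m (compR (i %% 3) (mulR a (nth (0, 0, 0) (enum L) (i %/ 3)))).

Definition phiC (m : nat) (L : {set RR}) : seq 'rV['F_3]_(3 * #|L|) :=
  [seq codeword m L a | a <- enum {: RR}].

End Defs.

Definition hamming (n : nat) (c d : 'rV['F_3]_n) : nat := #|[set i | c 0 i != d 0 i]|.

(* minimum Hamming distance between distinct codewords (n if fewer than 2 words) *)
Definition mindist (n : nat) (P : 'rV['F_3]_n -> bool) : nat :=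
  \big[minn/n]_(c : 'rV['F_3]_n)
     \big[minn/n]_(d : 'rV['F_3]_n | [&& P c, P d & c != d]) hamming c d.

(* the linear code spanned by S (equal to S when S is linear) is optimal:
   no ternary linear code of the same length and dimension has larger
   minimum distance *)
Definition optimal (n : nat) (S : seq 'rV['F_3]_n) : Prop :=
  forall C' : {vspace 'rV['F_3]_n},
    \dim C' = \dim <<S>>%VS ->
    (mindist (fun c => c \in C') <= mindist (fun c => c \in S))%N.

(* Evaluation at u = 1, eval1 x = x0 + x1 + x2, is a ring morphism from R onto the
   residue field of the local ring R: in characteristic 3 every x satisfies
   x^3 = eval1(x)^3, so x is a unit iff eval1 x != 0, and L' is the preimage of the
   nonzero squares.  Let L = eval1^-1(P) and q = 3^m.  Each Gray coordinate of the
   codeword of a at x is tr(l(x)) for a linear form l whose coefficients permute those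
   of a; substituting s = eval1 x shows that at least q |P| (2q/3) points of L have
   tr(l(x)) != 0, provided P meets the elements of nonzero trace proportionally under
   every dilation (clear for P = F^*, and true for the squares when m is odd, since
   -1 is then a nonsquare).  Hence phi(C(m)) is a ternary code of length 3 q^2 |P|,
   dimension 3m and minimum distance at least 2 q^2 |P|, and the Griesmer bound rules
   out distance 2 q^2 |P| + 1 for ternary linear codes of that length and dimension. *)

From HB Require Import structures.
From mathcomp Require Import all_boot all_order all_algebra all_field.
From mathcomp Require Import zify ring.
Set Implicit Arguments. Unset Strict Implicit. Unset Printing Implicit Defensive.
Import Order.TTheory GRing.Theory.

(* griesmer_sum q k d = \sum_(i < k) ceil(d / q ^ i), the length bound for [n, k, d]_q codes. *)
Fixpoint griesmer_sum (q k d : nat) : nat :=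
  if k is k'.+1 then d + griesmer_sum q k' ((d + q.-1) %/ q) else 0.

Lemma leq_griesmer_sum q k k' d :
  k <= k' -> griesmer_sum q k d <= griesmer_sum q k' d.
Proof.
elim: k k' d => [|k IHk] [|k'] d //= le_kk'.
by rewrite leq_add2l IHk.
Qed.

Lemma leq_ceil_div q d w : 0 < q -> d <= q * w -> (d + q.-1) %/ q <= w.
Proof. by move=> q_gt0 le_dqw; rewrite -ltnS ltn_divLR //; lia. Qed.

Lemma griesmer_sum3_exact j l A :
  2 * griesmer_sum 3 (j + l) (3 ^ j * A + 1) + 3 * A
  = 3 ^ j.+1 * A + 2 * j + 2 * griesmer_sum 3 l (A + 1).
Proof.
elim: j => [|j IHj] /=; first by rewrite add0n expn0 mul1n expn1; lia.
have -> : (3 ^ j.+1 * A + 1 + 2) %/ 3 = 3 ^ j * A + 1 by rewrite expnS; lia.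
move: IHj; rewrite !expnS; lia.
Qed.

Lemma griesmer_sum3_lb k d : 3 * (3 ^ k - 1) * d <= 2 * 3 ^ k * griesmer_sum 3 k d.
Proof.
elim: k d => [|k IHk] d /=; first by rewrite muln0.
have := IHk ((d + 2) %/ 3); have d_le : d <= 3 * ((d + 2) %/ 3) by lia.
move: d_le; rewrite expnS; have := expn_gt0 3 k.
set g := griesmer_sum _ _ _; set e := (d + 2) %/ 3; case: (3 ^ k) => [//|P] _.
nia.
Qed.

(* The first 2m terms of the Griesmer sum are exact, the last m are bounded below. *)
Lemma griesmer_sum3_gap m p : 0 < m -> p < 3 ^ m ->
  3 * (p * 3 ^ (2 * m)) < griesmer_sum 3 (3 * m) (2 * p * 3 ^ (2 * m)).+1.
Proof.
move=> m_gt0 p_lt.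
have tail : 6 * p < 4 * m + 2 * griesmer_sum 3 m (2 * p + 1).
  have := griesmer_sum3_lb m (2 * p + 1); move: p_lt.
  set g := griesmer_sum _ _ _; case: (3 ^ m) => [//|q] p_lt lb.
  rewrite ltnNge; apply/negP => le_g.
  have : q.+1 * (4 * m + 2 * g) <= q.+1 * (6 * p) by rewrite leq_mul2l le_g orbT.
  nia.
have := griesmer_sum3_exact (2 * m) m (2 * p).
rewrite (_ : 2 * m + m = 3 * m) ?expnS; last by lia.
rewrite [3 ^ _ * _]mulnC addn1; set Q := 3 ^ (2 * m); nia.
Qed.

Lemma expn3_mod4 m : odd m -> 3 ^ m %% 4 = 3.
Proof.
move=> odd_m; rewrite -(odd_double_half m) odd_m expnD -mul2n expnM.
by rewrite -modnMmr -modnXm /= exp1n.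
Qed.

Lemma sum_ord_divmod d n (G : nat -> nat -> nat) : 0 < d ->
  \sum_(i < d * n) G (i %/ d) (i %% d) = \sum_(k < n) \sum_(j < d) G k j.
Proof.
move=> d_gt0; rewrite -(big_mkord xpredT (fun i => G (i %/ d) (i %% d))) mulnC big_nat_mul.
rewrite big_mkord; apply: eq_bigr => k _.
rewrite mulSn addnC -{1}[k * d]add0n big_addn addKn big_mkord.
apply: eq_bigr => j _; rewrite [j + _]addnC divnMDl // modnMDl.
by rewrite divn_small ?modn_small ?addn0.
Qed.

Lemma sum_nth_enum (T : finType) (A : {set T}) x0 (H : T -> nat) :
  \sum_(k < #|A|) H (nth x0 (enum A) k) = \sum_(x in A) H x.
Proof. by rewrite -[RHS]big_enum [RHS](big_nth x0) [RHS]big_mkord -cardE. Qed.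

Lemma card_set_sum (T : finType) (P : pred T) : #|[set x | P x]| = \sum_x P x.
Proof. by rewrite -sum1dep_card big_mkcond; apply: eq_bigr => x _; case: (P x). Qed.

Local Open Scope ring_scope.

Lemma card_affine_neq0 (K : finFieldType) (a b : K) :
  b != 0 -> #|[set l : K | a + l * b != 0]| = #|K|.-1.
Proof.
move=> b_neq0; rewrite -(cardsC1 (- a / b)); apply: eq_card => l.
by rewrite !inE addrC addr_eq0 -(inj_eq (mulIf b_neq0) l) divfK.
Qed.

Section Griesmer.
Variables (K : finFieldType) (n : nat).
Implicit Types (x c : 'rV[K]_n) (D : {vspace 'rV[K]_n}).

Definition wt x : nat := #|[set i | x 0 i != 0]|.

Lemma wt_eq0 x : (wt x == 0%N) = (x == 0).
Proof.
rewrite cards_eq0; apply/eqP/eqP => [x0|->]; last by apply/setP => i; rewrite !inE mxE eqxx.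
apply/rowP => i; rewrite mxE; apply/eqP/negbNE/negP => xi.
by have := in_set0 i; rewrite -x0 inE xi.
Qed.

Definition overlap x c (l : K) : {set 'I_n} := [set i | (c 0 i != 0) && ((x + l *: c) 0 i != 0)].

Lemma sum_card_overlap x c : (\sum_l #|overlap x c l| = #|K|.-1 * wt c)%N.
Proof.
rewrite /wt -sum1_card big_distrr /= [RHS]big_mkcond /=.
under eq_bigr do rewrite -sum1_card big_mkcond /=.
rewrite exchange_big /=; apply: eq_bigr => i _; rewrite inE.
case: (boolP (c 0 i != 0)) => [ci_neq0|ci0].
  rewrite muln1 -(card_affine_neq0 (x 0 i) ci_neq0) -sum1_card [RHS]big_mkcond.
  by apply: eq_bigr => l _; rewrite !inE !mxE ci_neq0.
by rewrite big1 // => l _; rewrite inE (negbTE ci0).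
Qed.

Lemma exists_small_overlap x c :
  exists l, (#|K| * #|overlap x c l| <= #|K|.-1 * wt c)%N.
Proof.
case: (arg_minnP (fun l => #|overlap x c l|) (isT : predT 0)) => l _ l_min.
exists l; rewrite -(sum_card_overlap x) -sum_nat_const.
by apply: leq_sum => l' _; exact: l_min.
Qed.

Definition erase_supp c : 'End('rV[K]_n) :=
  linfun (mulmxr (diag_mx (\row_i (c 0 i == 0)%:R))).

Lemma erase_suppE c x i : erase_supp c x 0 i = if c 0 i == 0 then x 0 i else 0.
Proof. by rewrite lfunE /= mul_mx_diag !mxE; case: eqP; rewrite ?mulr1 ?mulr0. Qed.

Lemma erase_supp_id c : erase_supp c c = 0.
Proof. by apply/rowP => i; rewrite erase_suppE mxE; case: eqP. Qed.

Lemma wt_overlap_erase x c l :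
  wt (x + l *: c) = (#|overlap x c l| + wt (erase_supp c x))%N.
Proof.
rewrite /wt -(cardsID [set i | c 0 i != 0]); congr (_ + _)%N.
  by apply: eq_card => i; rewrite !inE andbC.
apply: eq_card => i; rewrite !inE erase_suppE !mxE negbK.
by case: eqP => [->|_] /=; rewrite ?mulr0 ?addr0 ?eqxx.
Qed.

Section Residual.
Variables (D : {vspace 'rV[K]_n}) (c : 'rV[K]_n).
Hypotheses (cD : c \in D) (c_neq0 : c != 0).
Hypothesis c_min : forall y, y \in D -> y != 0 -> (wt c <= wt y)%N.

Lemma wt_erase_supp x :
  x \in D -> x \notin <[c]>%VS -> (wt c <= #|K| * wt (erase_supp c x))%N.
Proof.
move=> xD x_notin_c; have [l small_l] := exists_small_overlap x c.
have xlc_neq0 : x + l *: c != 0.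
  apply: contraNneq x_notin_c => /eqP; rewrite addr_eq0 => /eqP ->.
  by rewrite memvN memvZ // memv_line.
have := c_min (memvD xD (memvZ l cD)) xlc_neq0; rewrite wt_overlap_erase.
have K_gt0 : (0 < #|K|)%N by apply/card_gt0P; exists 0.
move: small_l; set A := #|overlap _ _ _|; set E := wt _; set w := wt c.
nia.
Qed.

Lemma lker_erase_supp : (D :&: lker (erase_supp c))%VS = <[c]>%VS.
Proof.
apply/eqP; rewrite eqEsubv -memvE memv_cap cD memv_ker erase_supp_id eqxx !andbT.
apply/subvP => x /memv_capP[xD]; rewrite memv_ker => /eqP erase_x0.
apply/negPn/negP => /(wt_erase_supp xD); rewrite erase_x0.
have /eqP -> : wt 0 == 0%N by rewrite wt_eq0.
by rewrite muln0 leqn0 wt_eq0 (negbTE c_neq0).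
Qed.

End Residual.

(* Induction on the dimension, through the residual code of a word c of minimum
   weight: erasing the support of c loses exactly the line <[c]>. *)
Lemma griesmer_supp k : forall D (S : {set 'I_n}) d, \dim D = k ->
  (forall x, x \in D -> forall i, i \notin S -> x 0 i = 0) ->
  (forall x, x \in D -> x != 0 -> (d <= wt x)%N) ->
  (griesmer_sum #|K| k d <= #|S|)%N.
Proof.
elim: k => [//|k IHk] D S d dimD suppD wtD /=.
have pickD : (vpick D \in D) && (vpick D != 0).
  by rewrite memv_pick vpick0 -dimv_eq0 dimD.
case: (arg_minnP (P := fun y => (y \in D) && (y != 0)) wt pickD) => c /andP[cD c_neq0] c_min'.
have c_min y : y \in D -> y != 0 -> (wt c <= wt y)%N.
  by move=> yD y_neq0; apply: c_min'; rewrite yD.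
set T := [set i | c 0 i != 0].
have TS : T \subset S.
  by apply/subsetP => i; rewrite inE; apply: contraR => iS; rewrite suppD.
have dim_ker : \dim (D :&: lker (erase_supp c)) = 1%N.
  by rewrite (lker_erase_supp cD c_neq0 c_min) dim_vline c_neq0.
have dim_img : \dim (erase_supp c @: D) = k.
  by have := limg_ker_dim (erase_supp c) D; rewrite dim_ker dimD add1n => -[].
rewrite -(cardsID T S) (setIidPr TS); apply: leq_add; first exact: wtD c cD c_neq0.
apply: (IHk _ _ _ dim_img) => [_ /memv_imgP[x xD ->] i|_ /memv_imgP[x xD ->] y_neq0].
  by rewrite in_setD negb_and negbK inE erase_suppE; case: eqP => //= _ /(suppD _ xD).
have x_notin_c : x \notin <[c]>%VS.
  apply: contra y_neq0 => /vlineP[l ->]; by rewrite linearZ /= erase_supp_id scaler0.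
have K_gt0 : (0 < #|K|)%N by apply/card_gt0P; exists 0.
apply: leq_ceil_div => //; apply: leq_trans (wtD c cD c_neq0) _.
exact (wt_erase_supp cD c_neq0 c_min xD x_notin_c).
Qed.

Theorem griesmer_bound D d :
  (forall x, x \in D -> x != 0 -> (d <= wt x)%N) ->
  (griesmer_sum #|K| (\dim D) d <= n)%N.
Proof.
move=> wtD; rewrite -[X in (_ <= X)%N](card_ord n) -[#|'I_n|]cardsT.
by apply (griesmer_supp (erefl _)) => // x _ i; rewrite inE.
Qed.

End Griesmer.

Lemma eqr_nat_pchar (R : nzRingType) p a b : p \in [pchar R] ->
  (a%:R == b%:R :> R) = (a == b %[mod p])%N.
Proof.
move=> charRp; wlog le_ab : a b / (a <= b)%N.
  by move=> IH; case: (leqP a b) => [|/ltnW] /IH //; rewrite eq_sym [(_ == _ %[mod p])%N]eq_sym.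
by rewrite [in RHS]eq_sym eqn_mod_dvd // (dvdn_pcharf charRp) natrB // subr_eq0 eq_sym.
Qed.

Section Trace.
Variables (F : finFieldType) (m : nat).
Hypothesis cardF : #|F| = (3 ^ m)%N.

Lemma pchar3 : 3%N \in [pchar F].
Proof. exact: card_finPcharP cardF _. Qed.

Definition Tr (x : F) : F := \sum_(i < m) x ^+ (3 ^ i).

Lemma TrD x y : Tr (x + y) = Tr x + Tr y.
Proof.
rewrite -big_split; apply: eq_bigr => i _; apply: exprDn_pchar.
by rewrite pnatX pnatE //= pchar3.
Qed.

Lemma Tr_cube x : Tr x ^+ 3 = Tr x.
Proof.
rewrite /Tr -[_ ^+ 3]/(pFrobenius_aut pchar3 _) rmorph_sum /=.
under eq_bigr do rewrite pFrobenius_autE -exprM -expnSr.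
case: m cardF => [|k] cardF'; first by rewrite !big_ord0.
by rewrite big_ord_recr big_ord_recl /= -cardF' expf_card addrC.
Qed.

Lemma natr_F3_inj (k k' : 'F_3) : (k : nat)%:R = (k' : nat)%:R :> F -> k = k'.
Proof.
by move/eqP; rewrite (eqr_nat_pchar _ _ pchar3) !modn_small // => /eqP/val_inj.
Qed.

Lemma Tr_in_F3 x : exists k : 'F_3, Tr x = (k : nat)%:R.
Proof.
have : Tr x * (Tr x - 1) * (Tr x - 2%:R) = 0.
  have -> : Tr x * (Tr x - 1) * (Tr x - 2%:R) = Tr x ^+ 3 - Tr x + 3%:R * (Tr x - Tr x ^+ 2).
    by ring.
  by rewrite Tr_cube subrr (pcharf0 pchar3) mul0r addr0.
move/eqP; rewrite !mulf_eq0 !subr_eq0 => /orP[/orP[]|] /eqP ->.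
- by exists 0.
- by exists 1.
- by exists 2%:R.
Qed.

Lemma trF_natr x : (trF m x : nat)%:R = Tr x.
Proof.
rewrite /trF; case: pickP => [k /eqP -> //|no_k].
by have [k Trx] := Tr_in_F3 x; have := no_k k; rewrite -/(Tr x) Trx eqxx.
Qed.

Lemma trFD (x y : F) : trF m (x + y) = trF m x + trF m y.
Proof.
apply: natr_F3_inj; rewrite trF_natr TrD -!trF_natr -natrD.
by rewrite -(GRing.natr_mod_pchar pchar3).
Qed.

Lemma trF_is_zmod_morphism : zmod_morphism (@trF F m).
Proof. by move=> x y; apply/eqP; rewrite eq_sym subr_eq -trFD subrK. Qed.

HB.instance Definition _ := GRing.isZmodMorphism.Build F 'F_3 (@trF F m) trF_is_zmod_morphism.

Lemma trF0 : trF m (0 : F) = 0. Proof. exact: raddf0. Qed.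
Lemma trFN (x : F) : trF m (- x) = - trF m x. Proof. exact: raddfN. Qed.
Lemma trFB (x y : F) : trF m (x - y) = trF m x - trF m y. Proof. exact: raddfB. Qed.

(* Tr is evaluation of a nonzero polynomial of degree 3 ^ m.-1 < #|F|. *)
Lemma Tr_neq0 : (0 < m)%N -> exists x, Tr x != 0.
Proof.
move=> m_gt0; pose p : {poly F} := \sum_(i < m) 'X^(3 ^ i).
have pE x : p.[x] = Tr x by rewrite horner_sum; apply: eq_bigr => i _; rewrite hornerXn.
have p_neq0 : p != 0.
  apply/eqP => /(congr1 (fun q : {poly F} => q`_1)); rewrite coef_sum coef0.
  case: m m_gt0 => [//|k] _; rewrite big_ord_recl coefXn expn0 eqxx big1 ?addr0.
    exact/eqP/oner_neq0.
  by move=> i _; rewrite coefXn /= expnS; case: eqP => //; have := expn_gt0 3 i; lia.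
have size_p : (size p <= #|F|)%N.
  rewrite cardF; apply: (big_ind (fun q : {poly F} => size q <= 3 ^ m)%N) => [|q r|i _].
  - by rewrite size_poly0.
  - by move=> le_q le_r; rewrite (leq_trans (size_polyD _ _)) // geq_max le_q.
  - by rewrite size_polyXn ltn_exp2l.
case: (pickP (fun x => Tr x != 0)) => [x Trx|Tr0]; first by exists x.
move/eqP: p_neq0; case; apply: (@roots_geq_poly_eq0 _ _ (enum F)) => //.
- by apply/allP => x _; rewrite /root pE; have := Tr0 x => /negbFE.
- exact: enum_uniq.
- by rewrite -cardE.
Qed.

Lemma trF_neq0 : (0 < m)%N -> exists x : F, trF m x != 0.
Proof.
case/Tr_neq0 => x Trx; exists x; apply: contraNneq Trx => trx0.
by rewrite -trF_natr trx0.
Qed.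

Lemma card_trF_affine_neq0 (k b : F) : k != 0 ->
  #|[set y | trF m (k * y + b) != 0]| = #|[set y : F | trF m y != 0]|.
Proof.
move=> k_neq0; rewrite -[RHS](card_preimset _ (f := fun y => k * y + b)).
  by apply: eq_card => y; rewrite !inE.
by move=> y1 y2 /addIr/(mulfI k_neq0).
Qed.

(* If trF x0 != 0, exactly two of y, y + x0, y + 2 x0 have nonzero trace. *)
Lemma card_trF_neq0 : (0 < m)%N -> (3 * #|[set y : F | trF m y != 0%R]| = 2 * #|F|)%N.
Proof.
case/trF_neq0 => x0 trx0; set N := #|_|.
have shift l : #|[set y | trF m (y + x0 *+ l) != 0]| = N.
  apply: etrans (card_trF_affine_neq0 (x0 *+ l) (oner_neq0 F)).
  by apply: eq_card => y; rewrite !inE mul1r.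
transitivity (\sum_(l : 'F_3) #|[set y | trF m (y + x0 *+ l)%R != 0%R]|)%N.
  by under eq_bigr => l _ do rewrite shift; rewrite sum_nat_const card_Fp.
transitivity (\sum_(y : F) 2)%N; last by rewrite sum_nat_const mulnC.
under eq_bigr do rewrite card_set_sum.
rewrite exchange_big; apply: eq_bigr => y _.
have F3_pred : #|'F_3|.-1 = 2%N by rewrite card_Fp.
rewrite -[RHS]F3_pred -(card_affine_neq0 (trF m y) trx0) card_set_sum.
apply: eq_bigr => l _.
by rewrite raddfD raddfMn -mulr_natl natr_Zp.
Qed.

End Trace.

Section Squares.
Variable F : finFieldType.
Hypothesis two_neq0 : 2%:R != 0 :> F.

Lemma card_sqQ : (2 * #|sqQ F|)%N = #|F|.-1.
Proof.
have -> : #|F|.-1 = (\sum_(y : F | y != 0%R) 1)%N.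
  by rewrite sum1dep_card -(cardsC1 0); apply: eq_card => y; rewrite !inE.
rewrite (partition_big (fun y : F => y ^+ 2) (mem (sqQ F))) /=; last first.
  by move=> y y_neq0; rewrite inE expf_neq0 //=; apply/existsP; exists y.
rewrite mulnC -sum_nat_const; apply: eq_bigr => z; rewrite inE.
case/andP=> z_neq0 /existsP[w /eqP w2]; have w_neq0 : w != 0.
  by apply: contraNneq z_neq0 => w0; rewrite -w2 w0 expr0n.
have w_neq_opp : w != - w.
  by apply: contraNneq (mulf_neq0 two_neq0 w_neq0) => ww; rewrite mulr_natl mulr2n {1}ww addNr.
rewrite sum1dep_card; apply/esym; transitivity #|[set w; - w]|; last by rewrite cards2 w_neq_opp.
apply: eq_card => y.
rewrite !inE -w2 eqf_sqr; case: (eqVneq y w) => [->|_]; first by rewrite w_neq0.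
by case: (eqVneq y (- w)) => [->|]; rewrite ?oppr_eq0 ?w_neq0 ?andbF.
Qed.

Hypothesis card_mod4 : (#|F| %% 4 = 3)%N.

Lemma neg1_nonsquare (y : F) : y ^+ 2 != -1.
Proof.
apply/eqP => y2; have y_neq0 : y != 0.
  by apply: contra_eq_neq y2 => ->; rewrite expr0n eq_sym oppr_eq0 oner_neq0.
have := expf_card y; set k := (#|F| %/ 4)%N.
have -> : #|F| = (2 * (2 * k + 1) + 1)%N by rewrite {1}(divn_eq #|F| 4) card_mod4; lia.
rewrite exprD exprM y2 -signr_odd oddD oddM /= !expr1 mulN1r => /eqP.
rewrite eq_sym -addr_eq0 -mulr2n -mulr_natl mulf_eq0.
by rewrite (negbTE two_neq0) (negbTE y_neq0).
Qed.

(* The squares and their opposites are disjoint, of (#|F| - 1) / 2 elements each. *)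
Lemma sqQ_opp s : s != 0 -> (- s \in sqQ F) = (s \notin sqQ F).
Proof.
pose nQ := [set s : F | - s \in sqQ F].
have card_nQ : #|nQ| = #|sqQ F|.
  by rewrite -[RHS](card_preimset _ (@oppr_inj F)); apply: eq_card => t; rewrite !inE.
have disj : [disjoint sqQ F & nQ].
  apply/pred0P => t; rewrite /= !inE; apply/negP.
  case/andP=> /andP[t_neq0 /existsP[u /eqP u2]] /andP[_ /existsP[v /eqP v2]].
  have u_neq0 : u != 0 by apply: contraNneq t_neq0 => u0; rewrite -u2 u0 expr0n.
  have := neg1_nonsquare (v / u).
  by rewrite expr_div_n v2 -u2 mulNr divff ?expf_neq0 ?eqxx.
have cover : sqQ F :|: nQ = [set~ 0].
  apply/eqP; rewrite eqEcard; apply/andP; split.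
    by apply/subsetP => t; rewrite !inE oppr_eq0 => /orP[] /andP[].
  rewrite cardsC1 -card_sqQ mul2n -addnn -{2}card_nQ -cardsUI.
  by move: disj; rewrite -setI_eq0 => /eqP->; rewrite cards0 addn0.
move=> s_neq0; apply/idP/idP => [s_in|s_notin].
  by apply/negP => s_in'; move/pred0P/(_ s): disj; rewrite /= s_in' inE s_in.
have : s \in [set~ 0] by rewrite !inE.
by rewrite -cover inE (negbTE s_notin) inE.
Qed.

Lemma card_sqQ_sym (P : pred F) : ~~ P 0 -> (forall s, P (- s) = P s) ->
  (2 * #|[set s in sqQ F | P s]| = #|[set s | P s]|)%N.
Proof.
move=> nP0 P_opp; rewrite -[RHS](cardsID (sqQ F)) mul2n -addnn.
congr (_ + _)%N; first by apply: eq_card => s; rewrite !inE andbC.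
rewrite -(card_preimset _ (@oppr_inj F)); apply: eq_card => s; rewrite !inE P_opp.
case Ps: (P s); rewrite ?andbF ?andbT //.
have s_neq0 : s != 0 by apply: contraNneq nP0 => s0; rewrite -s0 Ps.
by have := sqQ_opp s_neq0; rewrite !inE.
Qed.

End Squares.

Section Ring.
Variable F : finFieldType.
Implicit Types a x : RR F.

Definition eval1 x : F := c0 x + c1 x + c2 x.

Lemma eval1M a x : eval1 (mulR a x) = eval1 a * eval1 x.
Proof. by rewrite /eval1 /mulR /mkR /c0 /c1 /c2 /=; ring. Qed.

Lemma eval1_ofUm1 (x1 x2 x3 : F) : eval1 (ofUm1 x1 x2 x3) = x1.
Proof. by rewrite /eval1 /ofUm1 /mkR /c0 /c1 /c2 /=; ring. Qed.

Lemma Lprime_eval1 : Lprime F = [set x | eval1 x \in sqQ F].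
Proof.
apply/setP => x; rewrite inE; apply/imsetP/idP => [[t] |x_in].
  by rewrite inE => t_in ->; rewrite eval1_ofUm1.
exists (eval1 x, c1 x + 2%:R * c2 x, c2 x); first by rewrite inE.
case: x x_in => [[x0 x1] x2] _; rewrite /ofUm1 /eval1 /mkR /c0 /c1 /c2 /=.
by congr (_, _, _); ring.
Qed.

Hypothesis F_pchar3 : 3%N \in [pchar F].

(* Frobenius: x^3 = x0^3 + x1^3 u^3 + x2^3 u^6 = eval1(x)^3. *)
Lemma mulR_cube x : mulR x (mulR x x) = mkR (eval1 x ^+ 3) 0 0.
Proof.
have h3 : 3%:R = 0 :> F := pcharf0 F_pchar3.
case: x => [[x0 x1] x2]; rewrite /mulR /eval1 /mkR /c0 /c1 /c2 /=.
by congr (_, _, _); ring: h3.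
Qed.

Lemma mulRCA a b x : mulR a (mulR b x) = mulR b (mulR a x).
Proof.
case: a b x => [[a0 a1] a2] [[b0 b1] b2] [[x0 x1] x2].
by rewrite /mulR /mkR /c0 /c1 /c2 /=; congr (_, _, _); ring.
Qed.

Lemma unitsR_eval1 : unitsR F = [set x | eval1 x != 0].
Proof.
apply/setP => x; rewrite !inE; apply/existsP/idP => [[y /eqP xy1]|x_unit].
  apply: contra_neq (oner_neq0 F) => x0.
  have eval1_one : eval1 (oneR F) = 1 by rewrite /eval1 /= !addr0.
  by rewrite -eval1_one -xy1 eval1M x0 mul0r.
exists (mulR (mkR (eval1 x ^+ 3)^-1 0 0) (mulR x x)).
rewrite mulRCA mulR_cube /mulR /oneR /mkR /c0 /c1 /c2 /=.
by rewrite !(mulr0, mul0r, addr0) mulVf ?expf_neq0.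
Qed.

End Ring.

Section Counting.
Variables (F : finFieldType) (m : nat).
Hypothesis cardF : #|F| = (3 ^ m)%N.
Local Notation N := #|[set y : F | trF m y != 0%R]|.

Definition trF_proportional (P : {set F}) : Prop := forall k : F, k != 0 ->
  (#|P| * N <= #|F| * #|[set s in P | trF m (k * s)%R != 0%R]|)%N.

Lemma card_eval1_pred (Q : F -> F -> F -> bool) :
  #|[set x : RR F | Q (eval1 x) (c1 x) (c2 x)]| =
  (\sum_(y1 : F) \sum_(y2 : F) #|[set s | Q s y1 y2]|)%N.
Proof.
symmetry; rewrite card_set_sum.
transitivity (\sum_(x1 : F) \sum_(x2 : F) \sum_(x0 : F) Q (eval1 (x0, x1, x2)) x1 x2)%N.
  apply: eq_bigr => y1 _; apply: eq_bigr => y2 _.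
  rewrite card_set_sum (reindex_inj (addIr (y1 + y2))) /=.
  by apply: eq_bigr => s _; rewrite /eval1 /= addrA.
rewrite (eq_bigr (fun x1 => \sum_x0 \sum_x2 Q (eval1 (x0, x1, x2)) x1 x2)%N); last first.
  by move=> x1 _; rewrite exchange_big.
rewrite exchange_big pair_bigA pair_bigA /=.
by apply: eq_bigr => [[[x0 x1] x2]] _.
Qed.

Lemma sum_card_trF_affine (P : {set F}) (a k c : F) : k != 0 ->
  (\sum_(y : F) #|[set s in P | trF m (a * s + k * y + c)%R != 0%R]| = #|P| * N)%N.
Proof.
move=> k_neq0; under eq_bigr do rewrite card_set_sum.
rewrite exchange_big /= -cardsE card_set_sum big_distrl /=; apply: eq_bigr => s _.
case: (s \in P) => /=; last by rewrite mul0n big1.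
rewrite mul1n -card_set_sum -(card_trF_affine_neq0 m (a * s + c) k_neq0).
by apply: eq_card => y; rewrite !inE addrAC addrC.
Qed.

(* With s = eval1 x the form reads a s + (b - a) x1 + (c - a) x2: if it involves x1
   or x2 the count is exactly #|F| * (#|P| * N), otherwise trF_proportional applies. *)
Lemma card_lform_ge (P : {set F}) (a b c : F) :
  [|| a != 0, b != 0 | c != 0] ->
  trF_proportional P ->
  (#|F| * (#|P| * N) <=
   #|[set x : RR F | (eval1 x \in P) && (trF m (a * c0 x + b * c1 x + c * c2 x)%R != 0%R)]|)%N.
Proof.
move=> abc_neq0 HP.
pose Q s y1 y2 := (s \in P) && (trF m (a * s + (b - a) * y1 + (c - a) * y2) != 0).
have -> : [set x : RR F | (eval1 x \in P) && (trF m (a * c0 x + b * c1 x + c * c2 x) != 0)]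
        = [set x | Q (eval1 x) (c1 x) (c2 x)].
  by apply/setP => x; rewrite !inE /Q /eval1; congr (_ && (trF m _ != 0)); ring.
rewrite card_eval1_pred /Q; case: (eqVneq b a) => [eq_ba | ba_neq0]; last first.
  rewrite exchange_big /=; under eq_bigr do rewrite sum_card_trF_affine ?subr_eq0 //.
  by rewrite sum_nat_const.
rewrite eq_ba; case: (eqVneq c a) => [eq_ca | ca_neq0]; last first.
  have swap12 y1 y2 :
      #|[set s in P | trF m (a * s + (a - a) * y1 + (c - a) * y2) != 0]| =
      #|[set s in P | trF m (a * s + (c - a) * y2 + (a - a) * y1) != 0]|.
    by apply: eq_card => s; rewrite !inE addrAC.
  under eq_bigr do under eq_bigr do rewrite swap12.
  by under eq_bigr do rewrite sum_card_trF_affine ?subr_eq0 //; rewrite sum_nat_const.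
have a_neq0 : a != 0 by move: abc_neq0; rewrite eq_ba eq_ca !orbb.
rewrite eq_ca.
have drop_y y1 y2 :
    #|[set s in P | trF m (a * s + (a - a) * y1 + (a - a) * y2) != 0]| =
    #|[set s in P | trF m (a * s) != 0]|.
  by apply: eq_card => s; rewrite !inE subrr !mul0r !addr0.
under eq_bigr do under eq_bigr do rewrite drop_y.
by rewrite !sum_nat_const leq_mul2l HP ?orbT.
Qed.

Lemma compR_mulRBl j (a b x : RR F) :
  compR j (mulR (a - b) x) = compR j (mulR a x) - compR j (mulR b x).
Proof.
by case: a b => [[a0 a1] a2] [[b0 b1] b2]; rewrite /compR /mulR /mkR /c0 /c1 /c2 /=;
  case: eqP => _; [|case: eqP => _]; ring.
Qed.

Lemma hamming_codeword (L : {set RR F}) (a b : RR F) :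
  hamming (codeword m L a) (codeword m L b) =
  (\sum_(j < 3) #|[set x in L | trF m (compR j (mulR (a - b)%R x)) != 0%R]|)%N.
Proof.
rewrite /hamming card_set_sum.
under eq_bigr do rewrite !mxE.
pose cw_neq (x : RR F) j : nat := trF m (compR j (mulR a x)) != trF m (compR j (mulR b x)).
rewrite (@sum_ord_divmod 3 #|L| (fun k j => cw_neq (nth (0, 0, 0) (enum L) k) j)) //.
rewrite exchange_big; apply: eq_bigr => j _.
rewrite (sum_nth_enum _ _ (cw_neq ^~ j)).
rewrite card_set_sum big_mkcond; apply: eq_bigr => x _.
by rewrite compR_mulRBl (trFB cardF) subr_eq0; case: (x \in L).
Qed.

Lemma RR_neq0 (c : RR F) : (c != 0) = [|| c0 c != 0, c1 c != 0 | c2 c != 0].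
Proof.
by case: c => [[x0 x1] x2]; rewrite (_ : 0 = (0, 0, 0)) // !xpair_eqE -!negb_and andbA.
Qed.

Lemma card_eval1_preim (P : {set F}) :
  #|[set x : RR F | eval1 x \in P]| = (#|F| * (#|F| * #|P|))%N.
Proof.
rewrite (card_eval1_pred (fun s _ _ => s \in P)).
by under eq_bigr do under eq_bigr do rewrite cardsE; rewrite !sum_nat_const.
Qed.

Section Weight.
Variable P : {set F}.
Hypothesis HP : trF_proportional P.
Local Notation L := [set x : RR F | eval1 x \in P].

Lemma card_codeword_supp_ge (c : RR F) j : c != 0 ->
  (#|F| * (#|P| * N) <= #|[set x in L | trF m (compR j (mulR c x)) != 0%R]|)%N.
Proof.
rewrite RR_neq0 => c_neq0.
have [a [b [d [abd_neq0 compRE]]]] : exists a b d, [|| a != 0, b != 0 | d != 0] /\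
    forall x, compR j (mulR c x) = a * c0 x + b * c1 x + d * c2 x.
  case: j => [|[|j]].
  - exists (c0 c), (c2 c), (c1 c); split; first by rewrite [(c2 c != 0) || _]orbC.
    by move=> x; rewrite /compR /mulR /c0 /c1 /c2 /=; ring.
  - exists (c1 c), (c0 c), (c2 c); split; first by rewrite orbCA.
    by move=> x; rewrite /compR /mulR /c0 /c1 /c2 /=; ring.
  - exists (c2 c), (c1 c), (c0 c); split.
      by rewrite [(c1 c != 0) || _]orbC orbCA [(c2 c != 0) || _]orbC.
    by move=> x; rewrite /compR /mulR /c0 /c1 /c2 /=; ring.
apply: leq_trans (card_lform_ge abd_neq0 HP) _; apply: subset_leq_card.
by apply/subsetP => x; rewrite !inE compRE.
Qed.

Lemma hamming_codeword_ge (a b : RR F) : (0 < m)%N -> a != b ->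
  (2 * #|P| * (#|F| * #|F|) <= hamming (codeword m L a) (codeword m L b))%N.
Proof.
move=> m_gt0 a_neq_b; rewrite hamming_codeword.
have ab_neq0 : a - b != 0 by rewrite subr_eq0.
apply: leq_trans _ (leq_sum _ (fun (j : 'I_3) _ => card_codeword_supp_ge j ab_neq0)).
rewrite sum_nat_const card_ord; have := card_trF_neq0 cardF m_gt0.
set q := #|F|; set p := #|P|; nia.
Qed.

End Weight.

End Counting.

Section MinimumDistance.
Variable n : nat.
Implicit Types (P : pred 'rV['F_3]_n) (c d : 'rV['F_3]_n).

Lemma hamming0r c : hamming c 0 = wt c.
Proof. by apply: eq_card => i; rewrite !inE mxE. Qed.

Lemma hammingxx c : hamming c c = 0%N.
Proof. by apply: eq_card0 => i; rewrite !inE eqxx. Qed.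

Lemma mindist_le P c d : P c -> P d -> c != d -> (mindist P <= hamming c d)%N.
Proof.
move=> Pc Pd cd; rewrite /mindist -minEnat.
apply: le_trans (bigmin_le_cond n _ (isT : predT c)) _.
by apply: bigmin_le_cond; rewrite Pc Pd cd.
Qed.

Lemma mindist_le_len P : (mindist P <= n)%N.
Proof.
rewrite /mindist; elim/big_ind: _ => // [x y x_le _ | c _]; first by rewrite geq_min x_le.
elim/big_ind: _ => // [x y x_le _ | d _]; first by rewrite geq_min x_le.
by rewrite /hamming -[X in (_ <= X)%N]card_ord max_card.
Qed.

Lemma mindist_ge P w :
  (forall c d, P c -> P d -> c != d -> w <= hamming c d)%N -> (minn n w <= mindist P)%N.
Proof.
move=> hamP; rewrite /mindist; elim/big_ind: _ => [|x y|c _]; rewrite ?geq_minl //.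
  by rewrite leq_min => -> ->.
elim/big_ind: _ => [|x y|d /and3P[Pc Pd cd]]; rewrite ?geq_minl //.
  by rewrite leq_min => -> ->.
by rewrite geq_min hamP ?orbT.
Qed.

Lemma optimal_of_griesmer (S : seq 'rV['F_3]_n) k w :
  (k <= \dim <<S>>)%N ->
  (forall c c', c \in S -> c' \in S -> c != c' -> w <= hamming c c')%N ->
  (n < griesmer_sum 3 k w.+1)%N -> optimal S.
Proof.
move=> le_k hamS gap C' dimC'.
apply: leq_trans (mindist_ge hamS); rewrite leq_min mindist_le_len /= leqNgt.
apply/negP => lt_d.
have wtC x : x \in C' -> x != 0 -> (w.+1 <= wt x)%N.
  move=> xC x_neq0; rewrite -hamming0r; apply: leq_trans lt_d (mindist_le _ _ x_neq0) => //.
  exact: mem0v.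
have := griesmer_bound wtC; rewrite card_Fp // dimC'.
by have := leq_griesmer_sum 3 w.+1 le_k; lia.
Qed.

End MinimumDistance.

Lemma card_le_span (K : finFieldType) n (T : finType) (f : T -> 'rV[K]_n) :
  injective f -> (#|T| <= #|K| ^ \dim <<[seq f x | x <- enum T]>>)%N.
Proof.
move=> f_inj; rewrite -card_vspace -(card_imset predT f_inj); apply: subset_leq_card.
by apply/subsetP => _ /imsetP[x _ ->]; apply: memv_span; rewrite map_f ?mem_enum.
Qed.

Section Optimality.
Variables (F : finFieldType) (m : nat).
Hypotheses (m_gt0 : (0 < m)%N) (cardF : #|F| = (3 ^ m)%N).

Lemma optimal_phiC_eval1 (P : {set F}) :
  trF_proportional m P -> (0 < #|P| < 3 ^ m)%N -> optimal (phiC m [set x | eval1 x \in P]).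
Proof.
move=> HP /andP[P_gt0 P_lt]; set L := [set x | eval1 x \in P].
have ham_ge a b : a != b ->
    (2 * #|P| * (#|F| * #|F|) <= hamming (codeword m L a) (codeword m L b))%N.
  exact: hamming_codeword_ge.
have W_gt0 : (0 < 2 * #|P| * (#|F| * #|F|))%N by rewrite !muln_gt0 P_gt0 cardF expn_gt0.
have codeword_inj : injective (codeword m L).
  move=> a b eq_ab; apply/eqP/negPn/negP => /ham_ge.
  by rewrite eq_ab hammingxx leqNgt W_gt0.
have dim_ge : (3 * m <= \dim <<phiC m L>>)%N.
  have := card_le_span codeword_inj; rewrite card_Fp // !card_prod cardF -!expnD.
  by rewrite leq_exp2l // (_ : (m + m + m = 3 * m)%N) //; lia.
apply: (optimal_of_griesmer dim_ge).
  by move=> _ _ /mapP[a _ ->] /mapP[b _ ->] neq_ab; apply: ham_ge; apply: contraNneq neq_ab => ->.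
have sq : (3 ^ m * 3 ^ m = 3 ^ (2 * m))%N by rewrite -expnD addnn mul2n.
rewrite card_eval1_preim cardF [(3 ^ m * (_ * _))%N]mulnA !sq [(3 ^ (2 * m) * _)%N]mulnC.
exact: griesmer_sum3_gap.
Qed.

Lemma two_neq0 : 2%:R != 0 :> F.
Proof. by rewrite -(dvdn_pcharf (pchar3 cardF) 2). Qed.

Lemma trF_proportional_nonzero : trF_proportional m [set~ (0 : F)].
Proof.
move=> k k_neq0.
have -> : #|[set s in [set~ 0] | trF m (k * s) != 0]| = #|[set y : F | trF m y != 0]|.
  rewrite -(card_trF_affine_neq0 m 0 k_neq0); apply: eq_card => s; rewrite !inE addr0.
  by case: eqP => [->|//]; rewrite mulr0 (trF0 cardF) eqxx.
by rewrite cardsC1 leq_mul2r leq_pred orbT.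
Qed.

Lemma trF_proportional_sqQ : odd m -> trF_proportional m (sqQ F).
Proof.
move=> odd_m k k_neq0.
have card_mod4 : (#|F| %% 4 = 3)%N by rewrite cardF expn3_mod4.
have card_half : (2 * #|[set s in sqQ F | trF m (k * s)%R != 0%R]| =
                  #|[set y : F | trF m y != 0%R]|)%N.
  rewrite (card_sqQ_sym two_neq0 card_mod4 (P := fun s => trF m (k * s) != 0)) /=.
  - by rewrite -(card_trF_affine_neq0 m 0 k_neq0); apply: eq_card => s; rewrite !inE addr0.
  - by rewrite mulr0 (trF0 cardF) eqxx.
  - by move=> s; rewrite mulrN (trFN cardF) oppr_eq0.
by rewrite -card_half mulnCA mulnA (card_sqQ two_neq0) leq_mul2r leq_pred orbT.
Qed.

End Optimality.

Theorem theorem6p1 (F : finFieldType) (m : nat) :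
  (0 < m)%N -> #|F| = (3 ^ m)%N ->
  (odd m -> optimal (phiC m (Lprime F))) /\ optimal (phiC m (unitsR F)).
Proof.
move=> m_gt0 cardF; have q_gt2 : (2 < 3 ^ m)%N.
  by case: m m_gt0 {cardF} => // k _; rewrite expnS; have := expn_gt0 3 k; lia.
split=> [odd_m | ].
  rewrite Lprime_eval1; apply: optimal_phiC_eval1 (trF_proportional_sqQ cardF odd_m) _ => //.
  have := card_sqQ (two_neq0 cardF); rewrite cardF; lia.
rewrite (unitsR_eval1 (pchar3 cardF)).
rewrite (_ : [set x | eval1 x != 0] = [set x | eval1 x \in [set~ 0]]); last first.
  by apply/setP => x; rewrite !inE.
apply: optimal_phiC_eval1 (trF_proportional_nonzero cardF) _ => //.
by rewrite cardsC1 cardF; lia.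
Qed.
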